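(* Let $\mathcal{X}=\{x_1,\dots,x_N\}$, $\Theta=\{\theta_1,\dots,\theta_M\}$, $\mathcal{A}$ be finite, let $\hat v_D,\hat v_U:\mathcal{X}\times\Theta\times\mathcal{A}\to\mathbb{R}$ be given (modulated) utilities, $b_D(\cdot|x)\in\Delta\Theta$ for $x\in\mathcal{X}$, and $\mathcal{S}=\{s_{\{a^1,\dots,a^M\}}:a^l\in\mathcal{A}\}$. For a common prior $\mathbf p\in\Delta\mathcal{X}$ (held by the defender and all user types), call $\pi:\mathcal{X}\to\Delta\mathcal{S}$ credible at $\mathbf p$ if $\sum_{x}[\hat v_U(x,\theta_l,a^l)-\hat v_U(x,\theta_l,a^h)]\pi(s_{\{a^1,\dots,a^M\}}|x)\mathbf p(x)\ge0$ for all $s_{\{a^1,\dots,a^M\}}\in\mathcal{S}$, $a^h\in\mathcal{A}$, $l$; set $$\bar v_D(\pi,\mathbf p)=\sum_x\mathbf p(x)\sum_{s_{\{a^1,\dots,a^M\}}}\pi(s_{\{a^1,\dots,a^M\}}|x)\sum_{l=1}^M b_D(\theta_l|x)\hat v_D(x,\theta_l,a^l),$$ let $V_D(\mathbf p)$ be the maximum of $\bar v_D(\pi,\mathbf p)$ over credible $\pi$, and let $\tilde v_D(\mathbf p)$ be the maximum of $\bar v_D(\pi,\mathbf p)$ over credible zero-information $\pi$ (i.e. $\pi(s|x)=\pi(s|x')$ for all $s,x,x'$). Then there exists $\mathbf p^0_g\in\Delta\mathcal{X}$ maximizing $\tilde v_D$ over $\Delta\mathcal{X}$, and for any such $\mathbf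 p^0_g$ it also maximizes $V_D$ over $\Delta\mathcal{X}$ with $\tilde v_D(\mathbf p^0_g)=V_D(\mathbf p^0_g)=\max_{\mathbf p\in\Delta\mathcal{X}}V_D(\mathbf p)$. Consequently, the optimal value of the joint choice of the common prior $\mathbf p\in\Delta\mathcal{X}$ and a credible generator at $\mathbf p$ does not depend on the original initial belief, and it is attained by choosing $\mathbf p=\mathbf p^0_g$ together with a zero-information generator.
   Context: Defender–user game with an overt trust manipulator: the defender may choose the common initial belief over the state that both she and all user types hold; the modulator (utility transfer) is fixed and already incorporated into $\hat v_D,\hat v_U$. A signal $s_{\{a^1,\dots,a^M\}}$ prescribes action $a^l$ to type $\theta_l$. *)

From mathcomp Require Import all_boot all_order all_algebra.
From mathcomp Require Import boolp classical_sets reals.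
Set Implicit Arguments. Unset Strict Implicit. Unset Printing Implicit Defensive.
Import Order.TTheory GRing.Theory Num.Theory.
Local Open Scope ring_scope.
Local Open Scope classical_set_scope.

Definition dist (R : realType) (T : finType) (p : T -> R) : Prop :=
  (forall t, 0 <= p t) /\ \sum_(t : T) p t = 1.

(* Signals s_{a^1,...,a^M}: the l-th component is the action prescribed to type theta_l. *)
Definition Signal (M : nat) (A : finType) := {ffun 'I_M -> A}.

Definition generator (R : realType) (X A : finType) (M : nat)
  (pi : X -> Signal M A -> R) : Prop := forall x, dist (pi x).

Definition credible (R : realType) (X A : finType) (M : nat)
  (vU : X -> 'I_M -> A -> R) (pi : X -> Signal M A -> R) (p : X -> R) : Prop :=
  forall (s : Signal M A) (ah : A) (l : 'I_M),
    0 <= \sum_(x : X) (vU x l (s l) - vU x l ah) * pi x s * p x.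

Definition zero_info (R : realType) (X A : finType) (M : nat)
  (pi : X -> Signal M A -> R) : Prop :=
  forall (s : Signal M A) (x x' : X), pi x s = pi x' s.

Definition vbar (R : realType) (X A : finType) (M : nat)
  (vD : X -> 'I_M -> A -> R) (bD : X -> 'I_M -> R)
  (pi : X -> Signal M A -> R) (p : X -> R) : R :=
  \sum_(x : X) p x * \sum_(s : Signal M A) pi x s *
     \sum_(l < M) bD x l * vD x l (s l).

(* V_D(p): optimal value over credible generators (as a supremum; the
   theorem additionally asserts that it is attained, i.e. is a maximum). *)
Definition VD (R : realType) (X A : finType) (M : nat)
  (vD vU : X -> 'I_M -> A -> R) (bD : X -> 'I_M -> R) (p : X -> R) : R :=
  sup [set v | exists pi : X -> Signal M A -> R,
         [/\ generator pi, credible vU pi p & v = vbar vD bD pi p]].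

Definition tildeVD (R : realType) (X A : finType) (M : nat)
  (vD vU : X -> 'I_M -> A -> R) (bD : X -> 'I_M -> R) (p : X -> R) : R :=
  sup [set v | exists pi : X -> Signal M A -> R,
         [/\ generator pi, zero_info pi, credible vU pi p & v = vbar vD bD pi p]].

From mathcomp Require Import all_boot all_order all_algebra.
From mathcomp Require Import boolp classical_sets functions reals ring.
From mathcomp Require Import topology normedtype matrix_normedtype derive.
Import Order.TTheory GRing.Theory Num.Theory.
Import numFieldNormedType.Exports.
Local Open Scope ring_scope.
Local Open Scope classical_set_scope.

(* Bayes plausibility.  A generator pi at the prior p splits p into the
   posteriors q_s (s ranging over signals of positive probability), and the
   credibility of pi says exactly that s is an obedient recommendation at q_s.
   Hence vbar(pi, p) is an average of the values signal_value q_s s of obedient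
   pairs, so it is at most the largest such value, attained at some (p1, s1)
   by compactness.  At the prior p1 the zero-information generator that always
   sends s1 attains this bound, so tilde v_D <= V_D <= signal_value p1 s1 =
   tilde v_D(p1), and every maximizer of tilde v_D attains the common optimum.
   The suprema V_D(p) are maxima because the credible generators at p form a
   compact polytope. *)

Lemma sum_pair {V : nmodType} {I J : finType} (F : I * J -> V) :
  \sum_t F t = \sum_i \sum_j F (i, j).
Proof. by rewrite pair_bigA; apply: eq_bigr => -[]. Qed.

Lemma exists_argmax {disp : Order.disp_t} {O : orderType disp} {I : finType}
    {P : I -> Prop} (h : I -> O) :
  (exists i, P i) -> exists i, P i /\ forall j, P j -> (h j <= h i)%O.
Proof.
move=> [i0 Pi0]; have Pi0b : `[< P i0 >] by apply/asboolP.
case: (arg_maxP (P := fun i => `[< P i >]) h Pi0b) => i /asboolP Pi imax.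
by exists i; split => // j /asboolP /imax.
Qed.

Lemma closed_forall_preimage {V U : topologicalType} {I : Type}
    {h : I -> V -> U} {C : I -> set U} :
  (forall i, continuous (h i)) -> (forall i, closed (C i)) ->
  closed [set v | forall i, C i (h i v)].
Proof.
move=> hc Cc.
have -> : [set v | forall i, C i (h i v)] = \bigcap_(i in setT) (h i @^-1` C i).
  by apply/seteqP; split => v /= H i; [move=> _|]; exact: H.
by apply: closed_bigI => i _; apply: preimage_closed => // v _; exact: hc.
Qed.

Section Distributions.
Context {R : realType}.

Lemma sum_delta {T : finType} (t0 : T) (F : T -> R) :
  \sum_t (t == t0)%:R * F t = F t0.
Proof.
rewrite (bigD1 t0) //= eqxx mul1r big1 ?addr0 // => t /negbTE ->.
by rewrite mul0r.
Qed.

Lemma dist_delta {T : finType} (t0 : T) : dist (fun t : T => (t == t0)%:R : R).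
Proof.
split=> [t|]; first exact: ler0n.
by rewrite -[RHS](sum_delta t0 (fun=> 1)); apply: eq_bigr => t _; rewrite mulr1.
Qed.

Lemma dist_le1 {T : finType} (p : T -> R) t : dist p -> p t <= 1.
Proof.
by case=> p_ge0 <-; rewrite (bigD1 t) //= lerDl; apply: sumr_ge0.
Qed.

Lemma sup_attained (E : set R) x : E x -> ubound E x -> sup E = x.
Proof.
move=> Ex ubx; apply/le_anti/andP; split; first by apply: ge_sup; first exists x.
by apply: ub_le_sup => //; exists x.
Qed.

End Distributions.

Section LinearProgram.
Context {R : realType} {T : finType}.

Let coord (v : 'rV[R]_#|T|) (t : T) : R := v ord0 (enum_rank t).

Lemma continuous_coord_sum (w : T -> R) :
  continuous (fun v => \sum_t w t * coord v t).
Proof.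
have -> : (fun v => \sum_t w t * coord v t) = \sum_t (fun v => w t * coord v t).
  by apply/funext => v; rewrite fct_sumE.
apply: (big_ind (fun h : 'rV[R]_#|T| -> R => continuous h)) => [|h1 h2 c1 c2 v|t _ v].
- have -> : 0 = (fun=> 0 : R) :> ('rV[R]_#|T| -> R) by [].
  exact: cst_continuous.
- exact: (@continuousD R R^o _ _ _ v (c1 v) (c2 v)).
- by apply: continuousM; [exact: cst_continuous | exact: coord_continuous].
Qed.

Definition lp_feasible {J K : finType} (a : J -> T -> R) (b : J -> R)
    (e : K -> T -> R) (d : K -> R) (f : T -> R) :=
  [/\ forall t, 0 <= f t, forall t, f t <= 1,
      forall j, b j <= \sum_t a j t * f t & forall k, \sum_t e k t * f t = d k].

Lemma lp_max {J K : finType} {a : J -> T -> R} {b : J -> R} {e : K -> T -> R}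
    {d : K -> R} {f0 : T -> R} (c : T -> R) :
  lp_feasible a b e d f0 -> exists2 f, lp_feasible a b e d f &
    forall g, lp_feasible a b e d g -> \sum_t c t * g t <= \sum_t c t * f t.
Proof.
move=> feas0.
pose row (f : T -> R) : 'rV[R]_#|T| := \row_i f (enum_val i).
have coord_row f : coord (row f) = f.
  by apply/funext => t; rewrite /coord mxE enum_rankK.
pose F := [set v | lp_feasible a b e d (coord v)].
have F_closed : closed F.
  have -> : F = [set v | forall t, [set x | 0 <= x] (coord v t)]
      `&` [set v | forall t, [set x | x <= 1] (coord v t)]
      `&` [set v | forall j, [set x | b j <= x] (\sum_t a j t * coord v t)]
      `&` [set v | forall k, [set x | x = d k] (\sum_t e k t * coord v t)].
    by apply/seteqP; split => v /=; [case=> *; do !split | case=> -[[]] *; split].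
  have coord_cont t : continuous (coord^~ t) by move=> v; exact: coord_continuous.
  apply: closedI; [apply: closedI; [apply: closedI|]|].
  - exact: (closed_forall_preimage (h := fun t v => coord v t) coord_cont
      (fun=> @closed_ge _ 0)).
  - exact: (closed_forall_preimage (h := fun t v => coord v t) coord_cont
      (fun=> @closed_le _ 1)).
  - exact: (closed_forall_preimage (h := fun j v => \sum_t a j t * coord v t)
      (fun j => continuous_coord_sum (a j)) (fun j => @closed_ge _ (b j))).
  - exact: (closed_forall_preimage (h := fun k v => \sum_t e k t * coord v t)
      (fun k => continuous_coord_sum (e k)) (fun k => @closed_eq _ (d k))).
have F_compact : compact F.
  have box_compact :
      compact [set v : 'rV[R]_#|T| | forall i, `[0 : R, 1]%classic (v ord0 i)].
    by apply: (@rV_compact _ _ (fun=> `[0 : R, 1]%classic)) => _; exact: segment_compact.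
  apply: (subclosed_compact F_closed box_compact).
  move=> v [v_ge0 v_le1 _ _] i /=.
  have := v_ge0 (enum_val i); have := v_le1 (enum_val i).
  by rewrite /coord enum_valK in_itv /= => -> ->.
have F_nonempty : F !=set0 by exists (row f0); rewrite /F /= coord_row.
have [v Fv v_max] := EVT_max_rV F_nonempty F_compact
  (continuous_subspaceT (continuous_coord_sum c)).
exists (coord v); first by move: Fv; rewrite inE.
move=> g Fg; have := v_max (row g); rewrite coord_row; apply.
by rewrite inE /F /= coord_row.
Qed.

End LinearProgram.
Section Game.
Context {R : realType} {X A : finType} {M : nat}.
Variables (vD vU : X -> 'I_M -> A -> R) (bD : X -> 'I_M -> R).
Hypotheses (HX : (0 < #|X|)%N) (HA : (0 < #|A|)%N).

Local Notation S := (Signal M A).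

Definition payoff (x : X) (s : S) : R := \sum_(l < M) bD x l * vD x l (s l).

Definition signal_value (p : X -> R) (s : S) : R := \sum_x p x * payoff x s.

Definition obedient (s : S) (p : X -> R) : Prop :=
  forall (ah : A) (l : 'I_M), 0 <= \sum_x (vU x l (s l) - vU x l ah) * p x.

Definition pure_generator (s0 : S) : X -> S -> R := fun _ s => (s == s0)%:R.

Definition signal_prob (p : X -> R) (pi : X -> S -> R) (s : S) : R :=
  \sum_x p x * pi x s.

Definition posterior (p : X -> R) (pi : X -> S -> R) (s : S) (x : X) : R :=
  p x * pi x s / signal_prob p pi s.

Lemma pure_generatorP s0 p : obedient s0 p ->
  [/\ generator (pure_generator s0), zero_info (pure_generator s0),
      credible vU (pure_generator s0) p &
      vbar vD bD (pure_generator s0) p = signal_value p s0].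
Proof.
move=> ob; split => //; first by move=> x; exact: dist_delta.
  move=> s ah l; rewrite /pure_generator; have [->|_] := eqVneq s s0.
    by under eq_bigr do rewrite mulr1; exact: ob.
  by rewrite big1 // => x _; rewrite mulr0 mul0r.
by apply: eq_bigr => x _; rewrite sum_delta.
Qed.

Lemma obedient_exists p : exists s, obedient s p.
Proof.
have [a0 _] := card_gt0P HA.
pose best l := [arg max_(a > a0) \sum_x vU x l a * p x]%O.
exists [ffun l => best l] => ah l; rewrite ffunE.
under eq_bigr do rewrite mulrBl.
by rewrite sumrB subr_ge0 /best; case: arg_maxP => // a _; apply.
Qed.

Lemma signal_prob_ge0 p pi s :
  dist p -> generator pi -> 0 <= signal_prob p pi s.
Proof.
by move=> [p_ge0 _] gen; apply: sumr_ge0 => x _; apply: mulr_ge0 => //; case: (gen x).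
Qed.

Lemma sum_signal_prob p pi :
  dist p -> generator pi -> \sum_s signal_prob p pi s = 1.
Proof.
move=> [_ <-] gen; rewrite exchange_big; apply: eq_bigr => x _.
by rewrite -mulr_sumr (gen x).2 mulr1.
Qed.

Lemma posterior_dist p pi s : dist p -> generator pi ->
  0 < signal_prob p pi s -> dist (posterior p pi s).
Proof.
move=> [p_ge0 _] gen m_gt0; split => [x|].
  by apply: divr_ge0 (ltW m_gt0); apply: mulr_ge0 => //; case: (gen x).
by rewrite -mulr_suml divff // gt_eqF.
Qed.

Lemma posterior_obedient p pi s : credible vU pi p ->
  0 < signal_prob p pi s -> obedient s (posterior p pi s).
Proof.
move=> cr m_gt0 ah l.
have -> : \sum_x (vU x l (s l) - vU x l ah) * posterior p pi s x =
    (\sum_x (vU x l (s l) - vU x l ah) * pi x s * p x) / signal_prob p pi s.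
  by rewrite mulr_suml; apply: eq_bigr => x _; rewrite /posterior; ring.
exact: divr_ge0 (cr s ah l) (ltW m_gt0).
Qed.

Lemma posterior_zero_info p pi s : dist p -> zero_info pi ->
  0 < signal_prob p pi s -> posterior p pi s = p.
Proof.
move=> [_ p_sum1] zi m_gt0; apply/funext => x.
have probE : signal_prob p pi s = pi x s.
  rewrite /signal_prob; under eq_bigr do rewrite (zi s _ x).
  by rewrite -mulr_suml p_sum1 mul1r.
by rewrite /posterior probE mulfK // -probE gt_eqF.
Qed.

Lemma vbar_posteriorE p pi : dist p -> generator pi ->
  vbar vD bD pi p = \sum_s signal_prob p pi s * signal_value (posterior p pi s) s.
Proof.
move=> dp gen; rewrite /vbar; under eq_bigr do rewrite mulr_sumr.
rewrite exchange_big; apply: eq_bigr => s _.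
have [m0|m_neq0] := eqVneq (signal_prob p pi s) 0.
  have mass0 x : p x * pi x s = 0.
    apply: (psumr_eq0P _ m0) => // y _.
    by apply: mulr_ge0; [case: dp | case: (gen y)].
  by rewrite m0 mul0r big1 // => x _; rewrite mulrA mass0 mul0r.
rewrite /signal_value mulr_sumr; apply: eq_bigr => x _.
by rewrite /posterior /payoff; field.
Qed.

Lemma vbar_le_posterior_bound (B : R) p pi : dist p -> generator pi ->
  (forall s, 0 < signal_prob p pi s -> signal_value (posterior p pi s) s <= B) ->
  vbar vD bD pi p <= B.
Proof.
move=> dp gen bound; rewrite vbar_posteriorE //.
rewrite -[leRHS]mul1r -(sum_signal_prob p pi dp gen) mulr_suml; apply: ler_sum => s _.
have := signal_prob_ge0 p pi s dp gen; rewrite le_eqVlt => /predU1P[<-|m_gt0].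
  by rewrite !mul0r.
by rewrite ler_pM2l // bound.
Qed.

Lemma vbar_le_of_obedient_bound (B : R) :
  (forall q s, dist q -> obedient s q -> signal_value q s <= B) ->
  forall p pi, dist p -> generator pi -> credible vU pi p -> vbar vD bD pi p <= B.
Proof.
move=> bound p pi dp gen cr; apply: vbar_le_posterior_bound => // s m_gt0.
by apply: bound; [exact: posterior_dist | exact: posterior_obedient].
Qed.

Lemma zero_info_vbar_bound p : dist p ->
  exists2 s, obedient s p & forall pi, generator pi -> zero_info pi ->
    credible vU pi p -> vbar vD bD pi p <= signal_value p s.
Proof.
move=> dp; have [s [obs smax]] := exists_argmax (signal_value p) (obedient_exists p).
exists s => // pi gen zi cr; apply: vbar_le_posterior_bound => // s' m_gt0.
rewrite posterior_zero_info //; apply: smax.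
by rewrite -(posterior_zero_info p pi s' dp zi m_gt0); exact: posterior_obedient.
Qed.

Lemma tildeVD_is_max p : dist p ->
  (exists pi, [/\ generator pi, zero_info pi, credible vU pi p &
                  vbar vD bD pi p = tildeVD vD vU bD p]) /\
  (forall pi, generator pi -> zero_info pi -> credible vU pi p ->
     vbar vD bD pi p <= tildeVD vD vU bD p).
Proof.
move=> dp; have [s obs smax] := zero_info_vbar_bound p dp.
have pure_ok := pure_generatorP s p obs.
have tildeVDE : tildeVD vD vU bD p = signal_value p s.
  apply: sup_attained; first by exists (pure_generator s); case: pure_ok.
  by move=> _ [pi [gen zi cr ->]]; exact: smax.
split; first by exists (pure_generator s); rewrite tildeVDE.
by move=> pi gen zi cr; rewrite tildeVDE; exact: smax.
Qed.

Let credibility_coef (p : X -> R) (j : S * A * 'I_M) (t : X * S) : R :=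
  let: (s, ah, l) := j in (t.2 == s)%:R * ((vU t.1 l (s l) - vU t.1 l ah) * p t.1).

Let row_sum_coef (x : X) (t : X * S) : R := (t.1 == x)%:R.

Lemma lp_feasible_generator p pi : dist p ->
  lp_feasible (credibility_coef p) (fun=> 0) row_sum_coef (fun=> 1)
    (fun t => pi t.1 t.2) <->
  generator pi /\ credible vU pi p.
Proof.
move=> dp.
have rowE x : \sum_t row_sum_coef x t * pi t.1 t.2 = \sum_s pi x s.
  rewrite sum_pair -(sum_delta x (fun y => \sum_s pi y s)).
  by apply: eq_bigr => y _; rewrite mulr_sumr.
have credE s ah l : \sum_t credibility_coef p (s, ah, l) t * pi t.1 t.2 =
    \sum_x (vU x l (s l) - vU x l ah) * pi x s * p x.
  rewrite sum_pair; apply: eq_bigr => x _.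
  rewrite -(sum_delta s (fun s' => (vU x l (s l) - vU x l ah) * pi x s' * p x)).
  by apply: eq_bigr => s' _ /=; ring.
split => [[pi_ge0 _ cr rows] | [gen cr]].
  split => [x | s ah l]; last by rewrite -credE; exact: (cr (s, ah, l)).
  by split => [s|]; [exact: (pi_ge0 (x, s)) | rewrite -rowE; exact: rows].
split => [t | t | [[s ah] l] | x]; first by case: (gen t.1).
- exact: dist_le1.
- by rewrite credE; exact: cr.
- by rewrite rowE; case: (gen x).
Qed.

Lemma lp_objective_vbar p pi :
  \sum_t p t.1 * payoff t.1 t.2 * pi t.1 t.2 = vbar vD bD pi p.
Proof.
rewrite sum_pair; apply: eq_bigr => x _; rewrite mulr_sumr.
by apply: eq_bigr => s _ /=; rewrite mulrAC -mulrA.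
Qed.

Lemma VD_is_max p : dist p ->
  (exists pi, [/\ generator pi, credible vU pi p & vbar vD bD pi p = VD vD vU bD p]) /\
  (forall pi, generator pi -> credible vU pi p -> vbar vD bD pi p <= VD vD vU bD p).
Proof.
move=> dp; have [s0 ob0] := obedient_exists p.
have [gen_s0 _ cr_s0 _] := pure_generatorP s0 p ob0.
have feas0 := (lp_feasible_generator p (pure_generator s0) dp).2 (conj gen_s0 cr_s0).
have [f feas fmax] := lp_max (fun t => p t.1 * payoff t.1 t.2) feas0.
pose pi0 x s := f (x, s).
have f_pi0 : f = fun t => pi0 t.1 t.2 by apply/funext => -[].
rewrite f_pi0 in feas fmax.
have [gen_pi0 cr_pi0] := (lp_feasible_generator p pi0 dp).1 feas.
have pi0_max pi : generator pi -> credible vU pi p -> vbar vD bD pi p <= vbar vD bD pi0 p.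
  move=> gen cr; rewrite -!lp_objective_vbar.
  exact/fmax/(lp_feasible_generator p pi dp).
have VDE : VD vD vU bD p = vbar vD bD pi0 p.
  apply: sup_attained; first by exists pi0.
  by move=> _ [pi [gen cr ->]]; exact: pi0_max.
split; first by exists pi0; rewrite VDE.
by move=> pi gen cr; rewrite VDE; exact: pi0_max.
Qed.

Let obedience_coef (s : S) (j : A * 'I_M) (x : X) : R :=
  let: (ah, l) := j in vU x l (s l) - vU x l ah.

Lemma lp_feasible_obedient s p :
  lp_feasible (obedience_coef s) (fun=> 0) (fun (_ : unit) _ => 1) (fun=> 1) p <->
  dist p /\ obedient s p.
Proof.
have sumE : \sum_x 1 * p x = \sum_x p x by apply: eq_bigr => x _; rewrite mul1r.
split => [[p_ge0 _ ob sum1] | [dp ob]].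
  by split => [|ah l]; [split; rewrite // -sumE sum1 | exact: (ob (ah, l))].
split => [x | x | [ah l] | _]; [by case: dp | exact: dist_le1 | exact: ob |].
by rewrite sumE; case: dp.
Qed.

Lemma obedient_prior_max s : (exists p, dist p /\ obedient s p) ->
  exists p, [/\ dist p, obedient s p &
    forall q, dist q -> obedient s q -> signal_value q s <= signal_value p s].
Proof.
move=> [p0 /(lp_feasible_obedient s p0) feas0].
have [p /(lp_feasible_obedient s p) [dp obp] pmax] := lp_max (payoff^~ s) feas0.
exists p; split => // q dq obq; rewrite /signal_value.
under eq_bigr do rewrite mulrC; under [leRHS]eq_bigr do rewrite mulrC.
exact/pmax/lp_feasible_obedient.
Qed.

Lemma obedient_joint_max : exists p1 s1, [/\ dist p1, obedient s1 p1 &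
  forall p s, dist p -> obedient s p -> signal_value p s <= signal_value p1 s1].
Proof.
pose feasible s := exists p, dist p /\ obedient s p.
have /choice [P Pmax] : forall s, exists p, feasible s -> [/\ dist p, obedient s p &
    forall q, dist q -> obedient s q -> signal_value q s <= signal_value p s].
  move=> s; have [/obedient_prior_max [p Hp] | infeasible] := pselect (feasible s).
    by exists p.
  by exists (fun=> 0) => /infeasible.
have [x0 _] := card_gt0P HX.
have [s0 ob0] := obedient_exists (fun x => (x == x0)%:R).
have [s1 [feas1 s1max]] := exists_argmax (fun s => signal_value (P s) s)
  (ex_intro feasible s0 (ex_intro _ _ (conj (dist_delta x0) ob0))).
have [dp1 ob1 _] := Pmax s1 feas1.
exists (P s1), s1; split => // p s dp obs.
have feas : feasible s by exists p.
have [_ _ smax] := Pmax s feas.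
exact: le_trans (smax p dp obs) (s1max s feas).
Qed.

End Game.

Theorem theorem3 (R : realType) (X A : finType) (M : nat)
  (vD vU : X -> 'I_M -> A -> R) (bD : X -> 'I_M -> R)
  (HX : (0 < #|X|)%N) (HA : (0 < #|A|)%N)
  (HbD : forall x, dist (bD x)) :
  (* V_D(p) and tilde v_D(p) are maxima (attained) at every p in Delta X *)
  (forall p : X -> R, dist p ->
     (exists pi, [/\ generator pi, credible vU pi p &
                     vbar vD bD pi p = VD vD vU bD p]) /\
     (exists pi, [/\ generator pi, zero_info pi, credible vU pi p &
                     vbar vD bD pi p = tildeVD vD vU bD p])) /\
  (* existence of a maximizer p0_g of tilde v_D over Delta X *)
  (exists p0 : X -> R, dist p0 /\
     forall p, dist p -> tildeVD vD vU bD p <= tildeVD vD vU bD p0) /\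
  (* any such maximizer also maximizes V_D, with equal values, and the
     joint optimum over (p, credible pi) is attained at p0 with a
     zero-information generator *)
  (forall p0 : X -> R, dist p0 ->
     (forall p, dist p -> tildeVD vD vU bD p <= tildeVD vD vU bD p0) ->
     [/\ forall p, dist p -> VD vD vU bD p <= VD vD vU bD p0,
         tildeVD vD vU bD p0 = VD vD vU bD p0 &
         exists pi0, [/\ generator pi0, zero_info pi0, credible vU pi0 p0,
                        vbar vD bD pi0 p0 = VD vD vU bD p0 &
                        forall p pi, dist p -> generator pi -> credible vU pi p ->
                          vbar vD bD pi p <= vbar vD bD pi0 p0]]).
Proof.
have VD_max := VD_is_max vD vU bD HA; have tildeVD_max := tildeVD_is_max vD vU bD HA.
have [p1 [s1 [dp1 ob1 max1]]] := obedient_joint_max vD vU bD HX HA.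
set v1 := signal_value vD bD p1 s1.
have vbar_le := vbar_le_of_obedient_bound vD vU bD v1 max1.
have VD_le p : dist p -> VD vD vU bD p <= v1.
  by move=> dp; have [[pi [gen cr <-]] _] := VD_max p dp; exact: vbar_le.
have tildeVD_le_VD p : dist p -> tildeVD vD vU bD p <= VD vD vU bD p.
  by move=> dp; have [[pi [gen _ cr <-]] _] := tildeVD_max p dp; exact: (VD_max p dp).2.
have v1_le : v1 <= tildeVD vD vU bD p1.
  rewrite /v1; have [gen1 zi1 cr1 <-] := pure_generatorP vD vU bD s1 p1 ob1.
  exact: (tildeVD_max p1 dp1).2.
split; first by move=> p dp; split; [case: (VD_max p dp) | case: (tildeVD_max p dp)].
split.
  exists p1; split => // p dp.
  exact: le_trans (tildeVD_le_VD p dp) (le_trans (VD_le p dp) v1_le).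
move=> p0 dp0 max0.
have tildeVD_p0 : tildeVD vD vU bD p0 = v1.
  apply/le_anti/andP; split; last exact: le_trans v1_le (max0 p1 dp1).
  exact: le_trans (tildeVD_le_VD p0 dp0) (VD_le p0 dp0).
have VD_p0 : VD vD vU bD p0 = v1.
  apply/le_anti/andP; split; first exact: VD_le.
  by rewrite -tildeVD_p0; exact: tildeVD_le_VD.
have [[pi0 [gen0 zi0 cr0 val0]] _] := tildeVD_max p0 dp0.
split => [p dp | | ]; first by rewrite VD_p0; exact: VD_le.
  by rewrite tildeVD_p0 VD_p0.
exists pi0; split => //; first by rewrite val0 tildeVD_p0 VD_p0.
by move=> p pi dp gen cr; rewrite val0 tildeVD_p0; exact: vbar_le.
Qed.
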